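(* Assume that $\gamma(s)>0$ for every $s\in S$. Fix a stationary policy $f$ and a cost vector $c\in\mathbb{R}^{|\mathcal{K}|}$. Consider the problem $$(\mathrm{I})\qquad \max_{\mathfrak{u}\in\mathfrak{U}}\ (1-\alpha)\,\gamma^T\big(I-\alpha P_f(\mathfrak{u})\big)^{-1}c_f,$$ and the second-order cone program $$(\mathrm{II})\qquad \max_{\mathfrak{w}_c,\ \mathfrak{z}_c}\ \mathfrak{w}_c^T c_f$$ subject to, for all $s\in S$, $$B(s)\,z_c(\cdot\mid s,\cdot)-b(s)\,w_c(s)\le 0,$$ $$\big\|M(s)^T z_c(\cdot\mid s,\cdot)+m(s)\,w_c(s)\big\|_2\le x(s)^T z_c(\cdot\mid s,\cdot)+y(s)\,w_c(s),$$ and $$\mathfrak{w}_c\ge(1-\alpha)\gamma,\qquad \mathfrak{w}_c^T(I-\alpha\bar P_f)-\alpha\sum_{s\in S} z_c(\cdot\mid s,\cdot)^T F_f(s)=(1-\alpha)\gamma^T,$$ where $\mathfrak{w}_c=(w_c(s))_{s\in S}\in\mathbb{R}^{|S|}$ and $\mathfrak{z}_c=(z_c(s'\mid s,a))_{(s,a,s')\in\mathcal{H}}$ with $z_c(\cdot\mid s,\cdot)=(z_c(s'\mid s,a))_{(a,s')\in A(s)\times S}\in\mathbb{R}^{|A(s)||S|}$. Then problems (I) and (II) are equivalent. That is, for every feasible $\mathfrak{u}$ of (I) there is a feasible $(\mathfrak{w}_c,\mathfrak{z}_c)$ of (II) with the same objective value, and conversely. In particular, their optimal values coincide.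
   Context: Setting. Let $S$ be a finite nonempty set of states. For each $s\in S$, let $A(s)$ be a finite nonempty set of actions. Put $\mathcal{K}=\{(s,a): s\in S,\ a\in A(s)\}$ and $\mathcal{H}=\{(s,a,s'): (s,a)\in\mathcal{K},\ s'\in S\}$. Let $\alpha\in(0,1)$ be a discount factor, and let $\gamma=(\gamma(s))_{s\in S}$ be a probability distribution on $S$ (the initial distribution). Let $\bar p(s'\mid s,a)\ge 0$, for $(s,a,s')\in\mathcal{H}$, be observed transition probabilities with $\sum_{s'\in S}\bar p(s'\mid s,a)=1$. Uncertainty. The true transition probabilities are $p(s'\mid s,a)=\bar p(s'\mid s,a)+u(s'\mid s,a)$, where the uncertain vector is $\mathfrak{u}=(u(s'\mid s,a))_{(s,a,s')\in\mathcal{H}}$. For $s\in S$, write $u(\cdot\mid s,\cdot)=(u(s'\mid s,a))_{(a,s')\in A(s)\times S}\in\mathbb{R}^{|A(s)||S|}$. The uncertainty set is $$\mathfrak{U}=\Big\{\mathfrak{u} : B(s)u(\cdot\mid s,\cdot)-b(s)\le 0,\ \|M(s)^Tu(\cdot\mid s,\cdot)+m(s)\|_2\le x(s)^Tu(\cdot\mid s,\cdot)+y(s)\ \ \forall s\in S\Big\}.$$ Here $B(s)\in\mathbb{R}^{\ell_p(s)\times|A(s)||S|}$, $b(s)\in\mathbb{R}^{\ell_p(s)}$, $M(s)\in\mathbb{R}^{|A(s)||S|\times \ell_{sc}(s)}$, $m(s)\in\mathbb{R}^{\ell_{sc}(s)}$, $x(s)\in\mathbb{R}^{|A(s)||S|}$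 and $y(s)\in\mathbb{R}$. The polyhedral constraints $B(s)u(\cdot\mid s,\cdot)\le b(s)$ include the conditions $\underline u(s'\mid s,a)\le u(s'\mid s,a)\le \bar u(s'\mid s,a)$ and $\sum_{s'\in S}u(s'\mid s,a)=0$ for all $(s,a,s')\in\mathcal{H}$. The bounds are such that $\bar p+\mathfrak{u}$ remains a vector of transition probabilities. Policies and matrices. A stationary policy is $f=(f(s,a))_{(s,a)\in\mathcal{K}}$ with $f(s,a)\ge0$ and $\sum_{a\in A(s)}f(s,a)=1$ for each $s$. - $P_f(\mathfrak{u})$ is the $|S|\times|S|$ matrix with $(s,s')$ entry $\sum_{a\in A(s)}f(s,a)\big(\bar p(s'\mid s,a)+u(s'\mid s,a)\big)$. - $\bar P_f$ is the $|S|\times|S|$ matrix with $(s,s')$ entry $\sum_{a\in A(s)}f(s,a)\bar p(s'\mid s,a)$. - For a cost vector $c=(c(s,a))_{(s,a)\in\mathcal{K}}$, $c_f\in\mathbb{R}^{|S|}$ has entries $c_f(s)=\sum_{a\in A(s)}f(s,a)c(s,a)$. - $F_f(s)$ is the $(|A(s)||S|)\times|S|$ matrix such that $v^T F_f(s)e_{s'}=\sum_{a\in A(s)}f(s,a)\,v(s'\mid s,a)$ for every $v=(v(s'\mid s,a))_{(a,s')\in A(s)\times S}$. - $e_{s}$ denotes the $s$-th standard unit vector in $\mathbb{R}^{|S|}$, and $I$ is the $|S|\times|S|$ identity matrix. *)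

(* S = 'I_N.+1 (finite, nonempty); A(s) = 'I_(ka s).+1
   (finite, nonempty).  Vectors indexed by A(s) x S are functions
   A s -> S -> R; matrices acting on them are written out entrywise. *)
From HB Require Import structures.
From mathcomp Require Import all_boot all_order all_algebra.
Set Implicit Arguments. Unset Strict Implicit. Unset Printing Implicit Defensive.
Import Order.TTheory GRing.Theory Num.Theory.
Local Open Scope ring_scope.

Section Defs.
Variable R : rcfType.
Variable N : nat.
Notation St := 'I_N.+1.
Variable ka : St -> nat.
Notation Act s := 'I_(ka s).+1.

Definition norm2 (l : nat) (v : 'I_l -> R) : R := Num.sqrt (\sum_(j < l) v j ^+ 2).

Definition blockvec := forall s : St, Act s -> St -> R.

Definition Bmul (lp : St -> nat) (B : forall s, 'I_(lp s) -> Act s -> St -> R)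
  (s : St) (v : Act s -> St -> R) (i : 'I_(lp s)) : R :=
  \sum_(a : Act s) \sum_(s' : St) B s i a s' * v a s'.

Definition MTmul (lsc : St -> nat) (M : forall s, Act s -> St -> 'I_(lsc s) -> R)
  (s : St) (v : Act s -> St -> R) (j : 'I_(lsc s)) : R :=
  \sum_(a : Act s) \sum_(s' : St) M s a s' j * v a s'.

Definition dotv (s : St) (x : Act s -> St -> R) (v : Act s -> St -> R) : R :=
  \sum_(a : Act s) \sum_(s' : St) x a s' * v a s'.

Definition Pf (f : forall s, Act s -> R) (pbar u : blockvec) : 'M[R]_N.+1 :=
  \matrix_(s, s') \sum_(a : Act s) f s a * (pbar s a s' + u s a s').

Definition Pbarf (f : forall s, Act s -> R) (pbar : blockvec) : 'M[R]_N.+1 :=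
  \matrix_(s, s') \sum_(a : Act s) f s a * pbar s a s'.

Definition cf (f c : forall s, Act s -> R) : 'cV[R]_N.+1 :=
  \col_s \sum_(a : Act s) f s a * c s a.

(* F_f(s) : rows indexed by (a, s'') in A(s) x S, columns by S;
   v^T F_f(s) e_{s'} = sum_a f(s,a) v(s'|s,a) *)
Definition Ff (f : forall s, Act s -> R) (s : St) (a : Act s) (s'' s' : St) : R :=
  if s'' == s' then f s a else 0.
End Defs.

From HB Require Import structures.
From mathcomp Require Import all_boot all_order all_algebra.
From mathcomp Require Import ring.
Import Order.TTheory GRing.Theory Num.Theory.
Local Open Scope ring_scope.

(* For u in U the matrix P_f(u) is stochastic, and for a substochastic P and
   0 <= alpha < 1 a row vector v with v (I - alpha P) >= 0 is itself >= 0: the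
   total mass of its negative part is at most alpha times itself.  Hence
   I - alpha P_f(u) is invertible and w = (1 - alpha) gamma (I - alpha P_f(u))^-1
   satisfies w >= (1 - alpha) gamma > 0.  The change of variables
   z(.|s,.) = w(s) u(.|s,.) turns the constraints of U into their perspective
   (homogenised) form, and the balance constraint of (II) into
   w (I - alpha P_f(u)) = (1 - alpha) gamma, so objective values agree; since
   w > 0 the substitution is inverted by u = z / w. *)

Lemma mul_row_discount (R : comPzRingType) n (v : 'rV[R]_n) (alpha : R)
    (P : 'M[R]_n) j :
  (v *m (1%:M - alpha *: P)) 0 j = v 0 j - alpha * \sum_i v 0 i * P i j.
Proof.
rewrite mulmxBr mulmx1 -scalemxAr !mxE.
by congr (_ - _ * _); apply: eq_bigr => i _.
Qed.

Section DiscountedSubstochastic.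
Context {R : realFieldType} {n : nat} {alpha : R} {P : 'M[R]_n}.
Hypotheses (alpha_ge0 : 0 <= alpha) (alpha_lt1 : alpha < 1).
Hypotheses (P_ge0 : forall i j, 0 <= P i j) (P_row_le1 : forall i, \sum_j P i j <= 1).

Lemma discount_row_ge0 (v : 'rV[R]_n) :
  (forall j, 0 <= (v *m (1%:M - alpha *: P)) 0 j) -> forall j, 0 <= v 0 j.
Proof.
move=> vA_ge0.
pose neg j := Num.max 0 (- v 0 j).
have neg_ge0 j : 0 <= neg j by rewrite le_max lexx.
have neg_le j : neg j <= alpha * \sum_i neg i * P i j.
  rewrite ge_max; apply/andP; split.
    by apply: mulr_ge0 => //; apply: sumr_ge0 => i _; apply: mulr_ge0.
  have := vA_ge0 j; rewrite mul_row_discount subr_ge0 lerNl => vj.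
  apply: le_trans vj; rewrite -mulrN ler_wpM2l // -sumrN.
  by apply: ler_sum => i _; rewrite -mulNr ler_wpM2r // lerNl /neg le_max lexx orbT.
have sum_neg_le : \sum_j neg j <= alpha * \sum_j neg j.
  apply: le_trans (ler_sum _ (fun j _ => neg_le j)) _.
  rewrite -mulr_sumr ler_wpM2l // exchange_big /=.
  by apply: ler_sum => i _; rewrite -mulr_sumr ler_piMr.
have sum_neg0 : \sum_j neg j = 0.
  apply/eqP; rewrite eq_le sumr_ge0 // andbT.
  have one_sub_gt0 : 0 < 1 - alpha by rewrite subr_gt0.
  by rewrite -(pmulr_rle0 _ one_sub_gt0) mulrBl mul1r subr_le0.
move=> j; have negj0 := psumr_eq0P (fun i _ => neg_ge0 i) sum_neg0 (i := j) isT.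
by rewrite -oppr_le0 -negj0 /neg le_max lexx orbT.
Qed.

Lemma discount_unitmx : 1%:M - alpha *: P \in unitmx.
Proof.
rewrite -row_free_unit -kermx_eq0 -submx0; apply/rV_subP => v.
rewrite sub_kermx submx0 => /eqP vA0.
have ker_ge0 (w : 'rV_n) : w *m (1%:M - alpha *: P) = 0 -> forall j, 0 <= w 0 j.
  by move=> wA0; apply: discount_row_ge0 => j; rewrite wA0 mxE.
apply/eqP/rowP => j; rewrite mxE; apply/eqP; rewrite eq_le ker_ge0 // andbT.
have := ker_ge0 (- v); rewrite mulNmx vA0 oppr0 => /(_ erefl j).
by rewrite mxE oppr_ge0.
Qed.

Lemma discount_solution_ge {v g : 'rV[R]_n} :
  v *m (1%:M - alpha *: P) = g -> (forall j, 0 <= g 0 j) ->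
  forall j, g 0 j <= v 0 j.
Proof.
move=> vAg g_ge0 j.
have v_ge0 : forall i, 0 <= v 0 i by apply: discount_row_ge0 => i; rewrite vAg.
rewrite -vAg mul_row_discount gerBl.
by apply: mulr_ge0 => //; apply: sumr_ge0 => i _; apply: mulr_ge0.
Qed.

End DiscountedSubstochastic.

Lemma sum2_scaled {R : comPzRingType} {I J : finType} (K : I -> J -> R)
    {v z : I -> J -> R} {t : R} :
  (forall a b, z a b = t * v a b) ->
  \sum_a \sum_b K a b * z a b = t * \sum_a \sum_b K a b * v a b.
Proof.
move=> zE; rewrite mulr_sumr; apply: eq_bigr => a _; rewrite mulr_sumr.
by apply: eq_bigr => b _; rewrite zE mulrCA.
Qed.

Lemma norm2_scale (R : rcfType) l (g : 'I_l -> R) (t : R) :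
  0 <= t -> norm2 (fun j => t * g j) = t * norm2 g.
Proof.
move=> t_ge0; rewrite /norm2.
under eq_bigr do rewrite exprMn.
by rewrite -mulr_sumr sqrtrM ?sqr_ge0 // sqrtr_sqr ger0_norm.
Qed.

Section RobustEvaluation.
Context {R : rcfType} {N : nat} {ka : 'I_N.+1 -> nat}.
Context {alpha : R} {gamma : 'I_N.+1 -> R}.
Context {pbar ulow uup : forall s : 'I_N.+1, 'I_(ka s).+1 -> 'I_N.+1 -> R}.
Context {lp lsc : 'I_N.+1 -> nat}.
Context {B : forall s : 'I_N.+1, 'I_(lp s) -> 'I_(ka s).+1 -> 'I_N.+1 -> R}
  {b : forall s : 'I_N.+1, 'I_(lp s) -> R}
  {M : forall s : 'I_N.+1, 'I_(ka s).+1 -> 'I_N.+1 -> 'I_(lsc s) -> R}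
  {m : forall s : 'I_N.+1, 'I_(lsc s) -> R}
  {x : forall s : 'I_N.+1, 'I_(ka s).+1 -> 'I_N.+1 -> R}
  {y : 'I_N.+1 -> R}.
Context {f c : forall s : 'I_N.+1, 'I_(ka s).+1 -> R}.

Hypotheses (alpha_gt0 : 0 < alpha) (alpha_lt1 : alpha < 1).
Hypothesis gamma_gt0 : forall s, 0 < gamma s.
Hypothesis pbar_sum1 : forall s a, \sum_s' pbar s a s' = 1.
Hypothesis B_bounds : forall s (v : 'I_(ka s).+1 -> 'I_N.+1 -> R),
  (forall i, Bmul B v i - b s i <= 0) ->
  (forall a s', ulow s a s' <= v a s' <= uup s a s') /\
  (forall a, \sum_s' v a s' = 0).
Hypothesis pbar_ulow_ge0 : forall s a s', 0 <= pbar s a s' + ulow s a s'.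
Hypotheses (f_ge0 : forall s a, 0 <= f s a) (f_sum1 : forall s, \sum_a f s a = 1).

Lemma Pf_ge0 (u : blockvec R ka) :
  (forall s a s', 0 <= pbar s a s' + u s a s') -> forall s s', 0 <= Pf f pbar u s s'.
Proof.
move=> p_ge0 s s'; rewrite mxE.
by apply: sumr_ge0 => a _; apply: mulr_ge0.
Qed.

Lemma Pf_row_sum (u : blockvec R ka) :
  (forall s a, \sum_s' u s a s' = 0) -> forall s, \sum_s' Pf f pbar u s s' = 1.
Proof.
move=> u_sum0 s.
under eq_bigr do rewrite mxE.
rewrite exchange_big /= -(f_sum1 s); apply: eq_bigr => a _.
by rewrite -mulr_sumr big_split /= pbar_sum1 u_sum0 addr0 mulr1.
Qed.

Lemma PfE (u : blockvec R ka) s s' :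
  Pf f pbar u s s' = Pbarf f pbar s s' + \sum_a f s a * u s a s'.
Proof. by rewrite !mxE -big_split; apply: eq_bigr => a _; rewrite mulrDr. Qed.

Lemma sum_Ff {s} (v : 'I_(ka s).+1 -> 'I_N.+1 -> R) s' :
  \sum_a \sum_s'' v a s'' * Ff f a s'' s' = \sum_a f s a * v a s'.
Proof.
apply: eq_bigr => a _; rewrite (bigD1 s') //= big1 => [|s'' /negbTE ne].
  by rewrite /Ff eqxx addr0 mulrC.
by rewrite /Ff ne mulr0.
Qed.

Lemma balance_scaled {u z : blockvec R ka} {w : 'I_N.+1 -> R} :
  (forall s a s', z s a s' = w s * u s a s') -> forall s',
  ((\row_s w s) *m (1%:M - alpha *: Pbarf f pbar)) 0 s'
    - alpha * \sum_s \sum_(a : 'I_(ka s).+1) \sum_(s'' : 'I_N.+1)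
                 z s a s'' * Ff f a s'' s'
  = ((\row_s w s) *m (1%:M - alpha *: Pf f pbar u)) 0 s'.
Proof.
move=> zE s'; rewrite !mul_row_discount.
suff -> : \sum_s (\row_s w s) 0 s * Pf f pbar u s s' =
    \sum_s (\row_s w s) 0 s * Pbarf f pbar s s'
    + \sum_s \sum_(a : 'I_(ka s).+1) \sum_s'' z s a s'' * Ff f a s'' s'.
  by ring.
rewrite -big_split; apply: eq_bigr => s _.
rewrite PfE sum_Ff mxE mulrDr mulr_sumr; congr (_ + _).
by apply: eq_bigr => a _; rewrite zE mulrCA.
Qed.

Lemma scaled_constraintsP {s t} {v z : 'I_(ka s).+1 -> 'I_N.+1 -> R} :
  0 < t -> (forall a s', z a s' = t * v a s') ->
  ((forall i, Bmul B z i - b s i * t <= 0) /\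
    norm2 (fun j => MTmul M z j + m s j * t) <= dotv (x s) z + y s * t) <->
  ((forall i, Bmul B v i - b s i <= 0) /\
    norm2 (fun j => MTmul M v j + m s j) <= dotv (x s) v + y s).
Proof.
move=> t_gt0 zE.
have BE i : Bmul B z i - b s i * t = t * (Bmul B v i - b s i).
  by rewrite /Bmul (sum2_scaled _ zE) mulrBr [b s i * t]mulrC.
have normE : norm2 (fun j => MTmul M z j + m s j * t) =
             t * norm2 (fun j => MTmul M v j + m s j).
  rewrite -norm2_scale ?ltW //; congr Num.sqrt; apply: eq_bigr => j _.
  by rewrite /MTmul (sum2_scaled _ zE) mulrDr [m s j * t]mulrC.
have dotE : dotv (x s) z + y s * t = t * (dotv (x s) v + y s).
  by rewrite /dotv (sum2_scaled _ zE) mulrDr [y s * t]mulrC.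
rewrite normE dotE ler_pM2l //.
by split=> -[B_le0 cone]; split=> // i; move: (B_le0 i); rewrite BE pmulr_rle0.
Qed.

Definition robust_feasible (u : blockvec R ka) :=
  forall s,
    (forall i, Bmul B (u s) i - b s i <= 0) /\
    norm2 (fun j => MTmul M (u s) j + m s j) <= dotv (x s) (u s) + y s.

Definition robust_value (u : blockvec R ka) :=
  (1 - alpha) * ((\row_s gamma s) *m invmx (1%:M - alpha *: Pf f pbar u)
                   *m cf f c) ord0 ord0.

Definition socp_feasible (w : 'I_N.+1 -> R) (z : blockvec R ka) :=
  (forall s,
    (forall i, Bmul B (z s) i - b s i * w s <= 0) /\
    norm2 (fun j => MTmul M (z s) j + m s j * w s)
      <= dotv (x s) (z s) + y s * w s) /\
  (forall s, (1 - alpha) * gamma s <= w s) /\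
  (forall s',
    ((\row_s w s) *m (1%:M - alpha *: Pbarf f pbar)) ord0 s'
    - alpha * \sum_s \sum_(a : 'I_(ka s).+1) \sum_(s'' : 'I_N.+1)
                 z s a s'' * Ff f a s'' s'
    = (1 - alpha) * gamma s').

Definition socp_value (w : 'I_N.+1 -> R) := ((\row_s w s) *m cf f c) ord0 ord0.

Lemma scaled_gamma_gt0 s : 0 < (1 - alpha) * gamma s.
Proof. by rewrite mulr_gt0 ?subr_gt0. Qed.

Lemma feasible_Pf_substochastic {u : blockvec R ka} :
  robust_feasible u ->
  (forall s s', 0 <= Pf f pbar u s s') /\ (forall s, \sum_s' Pf f pbar u s s' <= 1).
Proof.
move=> u_feas; have u_bounds s := B_bounds _ _ (u_feas s).1.
split; last by move=> s; rewrite Pf_row_sum // => s1 a; apply: (u_bounds s1).2.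
apply: Pf_ge0 => s a s'; apply: le_trans (pbar_ulow_ge0 s a s') _.
by rewrite lerD2l; case/andP: ((u_bounds s).1 a s').
Qed.

Lemma robust_to_socp u :
  robust_feasible u -> exists w z, socp_feasible w z /\ socp_value w = robust_value u.
Proof.
move=> u_feas; have [P_ge0 P_le1] := feasible_Pf_substochastic u_feas.
have A_unit := discount_unitmx (ltW alpha_gt0) alpha_lt1 P_ge0 P_le1.
set A := 1%:M - alpha *: Pf f pbar u in A_unit.
pose w_row := (1 - alpha) *: ((\row_s gamma s) *m invmx A).
have w_rowE : \row_s w_row 0 s = w_row by apply/rowP => s; rewrite mxE.
have wA : (\row_s w_row 0 s) *m A = (1 - alpha) *: \row_s gamma s.
  by rewrite w_rowE -scalemxAl mulmxKV.
have w_ge s : (1 - alpha) * gamma s <= w_row 0 s.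
  have := discount_solution_ge (ltW alpha_gt0) alpha_lt1 P_ge0 P_le1 wA _ s.
  by rewrite !mxE; apply=> s'; rewrite !mxE ltW ?scaled_gamma_gt0.
exists (fun s => w_row 0 s), (fun s a s' => w_row 0 s * u s a s').
split; last by rewrite /socp_value /robust_value w_rowE -!scalemxAl mxE.
split; [|split=> // s'].
- by move=> s; apply/(scaled_constraintsP (lt_le_trans (scaled_gamma_gt0 s) (w_ge s))).
- by rewrite (balance_scaled (u := u)) // wA !mxE.
Qed.

Lemma socp_to_robust w z :
  socp_feasible w z -> exists u, robust_feasible u /\ robust_value u = socp_value w.
Proof.
move=> [z_cone [w_ge balance]].
have w_gt0 s : 0 < w s := lt_le_trans (scaled_gamma_gt0 s) (w_ge s).
pose u : blockvec R ka := fun s a s' => z s a s' / w s.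
have zE s a s' : z s a s' = w s * u s a s' by rewrite /u mulrC divfK ?gt_eqF.
have u_feas : robust_feasible u.
  by move=> s; apply/(scaled_constraintsP (w_gt0 s) (zE s)).
exists u; split => //; have [P_ge0 P_le1] := feasible_Pf_substochastic u_feas.
have A_unit := discount_unitmx (ltW alpha_gt0) alpha_lt1 P_ge0 P_le1.
have wA : (\row_s w s) *m (1%:M - alpha *: Pf f pbar u)
           = (1 - alpha) *: \row_s gamma s.
  by apply/rowP => s'; rewrite -(balance_scaled zE) balance !mxE.
rewrite /socp_value /robust_value -(mulmxK A_unit (\row_s w s)) wA.
by rewrite -!scalemxAl [RHS]mxE.
Qed.

End RobustEvaluation.

Theorem mainTheorem1
  (R : rcfType) (N : nat) (ka : 'I_N.+1 -> nat)
  (alpha : R) (gamma : 'I_N.+1 -> R)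
  (pbar : forall s : 'I_N.+1, 'I_(ka s).+1 -> 'I_N.+1 -> R)
  (ulow uup : forall s : 'I_N.+1, 'I_(ka s).+1 -> 'I_N.+1 -> R)
  (lp : 'I_N.+1 -> nat)
  (B : forall s : 'I_N.+1, 'I_(lp s) -> 'I_(ka s).+1 -> 'I_N.+1 -> R)
  (b : forall s : 'I_N.+1, 'I_(lp s) -> R)
  (lsc : 'I_N.+1 -> nat)
  (M : forall s : 'I_N.+1, 'I_(ka s).+1 -> 'I_N.+1 -> 'I_(lsc s) -> R)
  (m : forall s : 'I_N.+1, 'I_(lsc s) -> R)
  (x : forall s : 'I_N.+1, 'I_(ka s).+1 -> 'I_N.+1 -> R)
  (y : 'I_N.+1 -> R)
  (f c : forall s : 'I_N.+1, 'I_(ka s).+1 -> R) :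
  (* discount factor and initial distribution *)
  0 < alpha -> alpha < 1 ->
  (forall s, 0 < gamma s) -> \sum_s gamma s = 1 ->
  (* observed transition probabilities *)
  (forall s a s', 0 <= pbar s a s') ->
  (forall s a, \sum_s' pbar s a s' = 1) ->
  (* the polyhedral constraints B(s) v <= b(s) include the bounds and the
     zero-sum conditions *)
  (forall s (v : 'I_(ka s).+1 -> 'I_N.+1 -> R),
      (forall i, Bmul B v i - b s i <= 0) ->
      (forall a s', ulow s a s' <= v a s' <= uup s a s') /\
      (forall a, \sum_s' v a s' = 0)) ->
  (* the bounds keep pbar + u a vector of transition probabilities *)
  (forall s a s', 0 <= pbar s a s' + ulow s a s') ->
  (forall s a s', pbar s a s' + uup s a s' <= 1) ->
  (* stationary policy *)
  (forall s a, 0 <= f s a) -> (forall s, \sum_a f s a = 1) ->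
  let feasI := fun u : blockvec R ka =>
    forall s,
      (forall i, Bmul B (u s) i - b s i <= 0) /\
      norm2 (fun j => MTmul M (u s) j + m s j) <= dotv (x s) (u s) + y s in
  let objI := fun u : blockvec R ka =>
    (1 - alpha) * ((\row_s gamma s) *m invmx (1%:M - alpha *: Pf f pbar u)
                     *m cf f c) ord0 ord0 in
  let feasII := fun (w : 'I_N.+1 -> R) (z : blockvec R ka) =>
    (forall s,
      (forall i, Bmul B (z s) i - b s i * w s <= 0) /\
      norm2 (fun j => MTmul M (z s) j + m s j * w s)
        <= dotv (x s) (z s) + y s * w s) /\
    (forall s, (1 - alpha) * gamma s <= w s) /\
    (forall s',
      ((\row_s w s) *m (1%:M - alpha *: Pbarf f pbar)) ord0 s'
      - alpha * \sum_s \sum_(a : 'I_(ka s).+1) \sum_(s'' : 'I_N.+1)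
                   z s a s'' * Ff f a s'' s'
      = (1 - alpha) * gamma s') in
  let objII := fun w : 'I_N.+1 -> R => ((\row_s w s) *m cf f c) ord0 ord0 in
  (forall u, feasI u -> exists w z, feasII w z /\ objII w = objI u) /\
  (forall w z, feasII w z -> exists u, feasI u /\ objI u = objII w).
Proof.
move=> alpha_gt0 alpha_lt1 gamma_gt0 _ _ pbar_sum1 B_bounds pbar_ulow_ge0 _ f_ge0 f_sum1.
split.
- exact: (robust_to_socp alpha_gt0 alpha_lt1 gamma_gt0 pbar_sum1 B_bounds
            pbar_ulow_ge0 f_ge0 f_sum1).
- exact: (socp_to_robust alpha_gt0 alpha_lt1 gamma_gt0 pbar_sum1 B_bounds
            pbar_ulow_ge0 f_ge0 f_sum1).
Qed.
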